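(* Let $\alpha(s)=(x(s),0,y(s),0)$, $s\in I$, be a smooth unit-speed curve in $\mathbb{E}^4$ ($x'^2+y'^2=1$) with $x^2+y^2>0$ on the open interval $I$, and let $M$ be the rotation surface $$X(s,t)=\big(x(s)\cos t,\ x(s)\sin t,\ y(s)\cos t,\ y(s)\sin t\big).$$ Assume $M$ is flat (its Gaussian curvature vanishes identically). Then $M$ has pointwise 1-type Gauss map if and only if either $M$ is totally geodesic (an open part of a plane), or $M$ is parametrized by $$X(s,t)=\big(\lambda\cos(b_0s+d)\cos t,\ \lambda\cos(b_0s+d)\sin t,\ \lambda\sin(b_0s+d)\cos t,\ \lambda\sin(b_0s+d)\sin t\big),\qquad b_0^2\lambda^2=1,$$ for some real constants $b_0,\lambda,d$.
   Context: Gauss map: with the orthonormal tangent frame $e_1=\frac{1}{\sqrt{x^2+y^2}}\partial_t$, $e_2=\partial_s$, the Gauss map is $G=e_1\wedge e_2: M\to \Lambda^2\mathbb{E}^4\cong\mathbb{E}^6$ (with the standard inner product $\langle u_1\wedge u_2,v_1\wedge v_2\rangle=\det(\langle u_i,v_j\rangle)$). The Laplacian of a (vector-valued) function $F$ on $M$ is $\Delta F=-\sum_{i=1}^2\big(\tilde\nabla_{e_i}\tilde\nabla_{e_i}F-\tilde\nabla_{\nabla_{e_i}e_i}F\big)$, where $\tilde\nabla$ is the Euclidean connection and $\nabla$ the induced (Levi-Civita) connection of $M$. $M$ has pointwise 1-type Gauss map if $\Delta G=f(G+C)$ for some smooth function $f$ on $M$ and some constant vector $C\in\Lambda^2\mathbb{E}^4$.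 *)

From Stdlib Require Import Reals Lra ClassicalEpsilon.
Open Scope R_scope.

(** Derivative of a real function (the value of the limit when it exists,
    an unspecified real otherwise). *)
Definition Dv (f : R -> R) (x : R) : R :=
  epsilon (inhabits 0) (fun l => derivable_pt_lim f x l).

Definition is_open_interval (I : R -> Prop) : Prop :=
  (exists s, I s) /\
  (forall a b c, I a -> I c -> a <= b <= c -> I b) /\
  (forall s, I s -> exists eps, 0 < eps /\ forall u, Rabs (u - s) < eps -> I u).

Definition smooth1 (I : R -> Prop) (f : R -> R) : Prop :=
  exists F : nat -> R -> R, F O = f /\
    forall n s, I s -> derivable_pt_lim (F n) s (F (S n) s).

Definition cont2 (g : R -> R -> R) (s t : R) : Prop :=
  forall eps, 0 < eps -> exists del, 0 < del /\
    forall u v, Rabs (u - s) < del -> Rabs (v - t) < del ->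
      Rabs (g u v - g s t) < eps.

Definition smooth2 (I : R -> Prop) (f : R -> R -> R) : Prop :=
  exists F : nat -> nat -> R -> R -> R, F O O = f /\
    forall i j s t, I s ->
      derivable_pt_lim (fun u => F i j u t) s (F (S i) j s t) /\
      derivable_pt_lim (fun v => F i j s v) t (F i (S j) s t) /\
      cont2 (F i j) s t.

(** * Vectors: a vector of E^n is a function [nat -> R] (components 0..n-1). *)
Definition Vec := nat -> R.
(** A vector field along the surface: a function of the parameters (s,t). *)
Definition VF := R -> R -> Vec.

Definition inner4 (u v : Vec) : R :=
  u 0%nat * v 0%nat + u 1%nat * v 1%nat + u 2%nat * v 2%nat + u 3%nat * v 3%nat.

Definition ds (F : VF) : VF := fun s t i => Dv (fun u => F u t i) s.
Definition dt (F : VF) : VF := fun s t i => Dv (fun v => F s v i) t.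

Definition rotsurf (x y : R -> R) : VF := fun s t i =>
  match i with
  | 0%nat => x s * cos t
  | 1%nat => x s * sin t
  | 2%nat => y s * cos t
  | 3%nat => y s * sin t
  | _ => 0
  end.

Definition rr (x y : R -> R) (s : R) : R := sqrt (x s ^ 2 + y s ^ 2).

(** Orthonormal frame: e1 = (1/sqrt(x^2+y^2)) d_t (frame index 0),
    e2 = d_s (frame index 1). *)
Definition frame (x y : R -> R) (k : nat) : VF :=
  match k with
  | 0%nat => fun s t i => / rr x y s * dt (rotsurf x y) s t i
  | _ => ds (rotsurf x y)
  end.

(** Euclidean derivative  ~nabla_{e_k} F  of an (R^n-valued) field along M. *)
Definition Dir (x y : R -> R) (k : nat) (F : VF) : VF :=
  match k with
  | 0%nat => fun s t i => / rr x y s * dt F s t i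
  | _ => ds F
  end.

Definition Dee (x y : R -> R) (k l : nat) : VF := Dir x y k (frame x y l).

(** Second fundamental form h(e_k,e_l) = normal part of ~nabla_{e_k} e_l,
    i.e. ~nabla_{e_k} e_l - nabla_{e_k} e_l with
    nabla_{e_k} e_l = sum_m <~nabla_{e_k} e_l, e_m> e_m. *)
Definition sff (x y : R -> R) (k l : nat) : VF := fun s t i =>
  Dee x y k l s t i
  - inner4 (Dee x y k l s t) (frame x y 0 s t) * frame x y 0 s t i
  - inner4 (Dee x y k l s t) (frame x y 1 s t) * frame x y 1 s t i.

(** Gaussian curvature (Gauss equation):
    K = <h(e1,e1),h(e2,e2)> - <h(e1,e2),h(e1,e2)>. *)
Definition gauss_curv (x y : R -> R) (s t : R) : R :=
  inner4 (sff x y 0 0 s t) (sff x y 1 1 s t)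
  - inner4 (sff x y 0 1 s t) (sff x y 0 1 s t).

Definition totally_geodesic (I : R -> Prop) (x y : R -> R) : Prop :=
  forall s t, I s -> forall k l i, (k < 2)%nat -> (l < 2)%nat -> (i < 4)%nat ->
    sff x y k l s t i = 0.

(** * Gauss map G = e1 /\ e2 in Lambda^2 E^4 = E^6, in the orthonormal basis
    e_0/\e_1, e_0/\e_2, e_0/\e_3, e_1/\e_2, e_1/\e_3, e_2/\e_3
    (orthonormal for <u1/\u2, v1/\v2> = det(<u_i,v_j>)). *)
Definition wedge (u v : Vec) : Vec := fun i =>
  let w a b := u a * v b - u b * v a in
  match i with
  | 0%nat => w 0%nat 1%nat
  | 1%nat => w 0%nat 2%nat
  | 2%nat => w 0%nat 3%nat
  | 3%nat => w 1%nat 2%nat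
  | 4%nat => w 1%nat 3%nat
  | 5%nat => w 2%nat 3%nat
  | _ => 0
  end.

Definition gauss_map (x y : R -> R) : VF := fun s t =>
  wedge (frame x y 0 s t) (frame x y 1 s t).

(** Laplacian  Delta F = - sum_k ( ~nabla_{e_k} ~nabla_{e_k} F
                                    - ~nabla_{nabla_{e_k} e_k} F ),
    with nabla_{e_k} e_k = sum_m <~nabla_{e_k} e_k, e_m> e_m. *)
Definition lap (x y : R -> R) (F : VF) : VF := fun s t i =>
  - ( (Dir x y 0 (Dir x y 0 F) s t i
        - ( inner4 (Dee x y 0 0 s t) (frame x y 0 s t) * Dir x y 0 F s t i
          + inner4 (Dee x y 0 0 s t) (frame x y 1 s t) * Dir x y 1 F s t i))
    + (Dir x y 1 (Dir x y 1 F) s t i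
        - ( inner4 (Dee x y 1 1 s t) (frame x y 0 s t) * Dir x y 0 F s t i
          + inner4 (Dee x y 1 1 s t) (frame x y 1 s t) * Dir x y 1 F s t i))).

(** Pointwise 1-type Gauss map: Delta G = f (G + C) for a smooth function f
    on M (as a function of the parameters (s,t) in I x R) and a constant
    vector C in Lambda^2 E^4 = E^6. *)
Definition pointwise_1type (I : R -> Prop) (x y : R -> R) : Prop :=
  exists (f : R -> R -> R) (C : Vec), smooth2 I f /\
    forall s t, I s -> forall i, (i < 6)%nat ->
      lap x y (gauss_map x y) s t i = f s t * (gauss_map x y s t i + C i).

From Stdlib Require Import Reals Lra Lia ClassicalEpsilon Nsatz.
Open Scope R_scope.

(** Write the unit-speed profile as z = x + i y = r e^{i theta}, r > 0, and
    introduce its invariants: the radial speed a = r', the angular speed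
    q = r theta' (a^2 + q^2 = 1), the curvature kappa, and u + i v = z z'/r.
    1. Computing the frame, the second fundamental form and the Gaussian
       curvature in these terms gives K = q (kappa r - q) / r^2, and M is
       totally geodesic iff q = kappa = 0.
    2. Flatness therefore makes a' = q (q - kappa r) / r vanish; a case split
       on q^2 = 1 - a^2 yields the normal form: a = a0, q = q0 constant and
       kappa r = q0 ([flat_normal_form]).
    3. In the normal form u' = -2 q0 v / r and v' = 2 q0 u / r; the Gauss map
       is affine in u, v, cos 2t, sin 2t, and the coordinate expression of the
       Laplacian gives Delta G explicitly ([lap_gauss]).
    4. If Delta G = f (G + C) and q0 <> 0, four components at t = 0, pi/4
       force a0 = 0 ([radial_zero_of_one_type]); then r is constant and the
       profile is a circle.  Conversely, a plane (q0 = 0) has harmonic Gauss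
       map and a circle of radius lam has Delta G = (4 / lam^2) G. *)

Notation dpl := derivable_pt_lim.

Lemma Deq f s l l' : dpl f s l -> l = l' -> dpl f s l'.
Proof. now intros H <-. Qed.

Lemma Dloc f g s l :
  (exists eps, 0 < eps /\ forall u, Rabs (u - s) < eps -> f u = g u) ->
  dpl g s l -> dpl f s l.
Proof.
  intros [eps [He H]] D e He'. destruct (D e He') as [[d Hd] Hd2].
  assert (Hm : 0 < Rmin d eps) by (apply Rmin_pos; auto).
  exists (mkposreal _ Hm). intros h Hh0 Hh. simpl in Hh.
  rewrite (H s), (H (s + h)).
  - apply Hd2; auto. apply Rlt_le_trans with (1 := Hh). apply Rmin_l.
  - replace (s + h - s) with h by ring. apply Rlt_le_trans with (1 := Hh). apply Rmin_r.
  - rewrite Rminus_diag, Rabs_R0. exact He.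
Qed.

Lemma Dext f g s l : (forall u, f u = g u) -> dpl g s l -> dpl f s l.
Proof.
  intros H. apply Dloc. exists 1. split; [lra | auto].
Qed.

Lemma Dv_eq f s l : dpl f s l -> Dv f s = l.
Proof.
  intros H. unfold Dv.
  pose proof (epsilon_spec (inhabits 0) (fun l => dpl f s l) (ex_intro _ l H)).
  eapply uniqueness_limite; eauto.
Qed.

Lemma Dconst c s : dpl (fun _ => c) s 0.
Proof. apply derivable_pt_lim_const. Qed.
Lemma Did s : dpl (fun u => u) s 1.
Proof. apply derivable_pt_lim_id. Qed.
Lemma Dmul f g s df dg : dpl f s df -> dpl g s dg ->
  dpl (fun u => f u * g u) s (df * g s + f s * dg).
Proof. intros; apply (derivable_pt_lim_mult f g); auto. Qed.
Lemma Dadd f g s df dg : dpl f s df -> dpl g s dg ->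
  dpl (fun u => f u + g u) s (df + dg).
Proof. intros; apply (derivable_pt_lim_plus f g); auto. Qed.
Lemma Dsub f g s df dg : dpl f s df -> dpl g s dg ->
  dpl (fun u => f u - g u) s (df - dg).
Proof. intros; apply (derivable_pt_lim_minus f g); auto. Qed.
Lemma Dopp f s df : dpl f s df -> dpl (fun u => - f u) s (- df).
Proof. intros; apply (derivable_pt_lim_opp f); auto. Qed.
Lemma Dinv f s df : dpl f s df -> f s <> 0 ->
  dpl (fun u => / f u) s (- df / (f s * f s)).
Proof.
  intros H Hn.
  assert (D := derivable_pt_lim_div (fun _ => 1) f s 0 df (Dconst 1 s) H Hn).
  apply Dext with (g := fun u => 1 / f u); [| eapply Deq; [exact D |]].
  - intros u. unfold Rdiv. ring.
  - unfold Rsqr. field. auto.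
Qed.
Lemma Dsqrt f s df : dpl f s df -> 0 < f s ->
  dpl (fun u => sqrt (f u)) s (df / (2 * sqrt (f s))).
Proof.
  intros H Hp. eapply Deq.
  - apply (derivable_pt_lim_comp f sqrt s df (/ (2 * sqrt (f s)))); auto.
    apply derivable_pt_lim_sqrt; auto.
  - unfold Rdiv. ring.
Qed.
Lemma Dcos f s df : dpl f s df -> dpl (fun u => cos (f u)) s (- sin (f s) * df).
Proof. intros H. apply (derivable_pt_lim_comp f cos); auto. apply derivable_pt_lim_cos. Qed.
Lemma Dsin f s df : dpl f s df -> dpl (fun u => sin (f u)) s (cos (f s) * df).
Proof. intros H. apply (derivable_pt_lim_comp f sin); auto. apply derivable_pt_lim_sin. Qed.
Lemma Dpow2 f s df : dpl f s df -> dpl (fun u => f u ^ 2) s (2 * f s * df).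
Proof.
  intros H. eapply Dext; [| eapply Deq; [apply (Dmul f f s df df H H) |]].
  - intros u. simpl. ring.
  - ring.
Qed.

(** Differentiate a closed expression by the sum/product/chain rules; the
    remaining goals are derivatives of the abstract functions, found among
    the hypotheses, and nonvanishing of denominators. *)
Ltac dauto := repeat first
  [ eassumption | apply Dconst | apply Did
  | apply Dmul | apply Dadd | apply Dsub | apply Dopp | apply Dinv
  | apply Dpow2 | apply Dcos | apply Dsin ].

Lemma const_on_interval (I : R -> Prop) f f' :
  is_open_interval I ->
  (forall s, I s -> dpl f s (f' s)) -> (forall s, I s -> f' s = 0) ->
  forall s1 s2, I s1 -> I s2 -> f s1 = f s2.
Proof.
  intros [_ [Hint _]] Hd H0.
  assert (K : forall a b, I a -> I b -> a < b -> f a = f b).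
  { intros a b Ha Hb Hab.
    destruct (MVT_cor2 f f' a b Hab) as [c [Hc1 Hc2]].
    - intros c Hc. apply Hd. apply (Hint a c b); auto.
    - rewrite H0 in Hc1; [lra |]. apply (Hint a c b); auto. lra. }
  intros s1 s2 H1 H2. destruct (Rtotal_order s1 s2) as [h|[h|h]].
  - auto.
  - subst; auto.
  - symmetry; auto.
Qed.

Lemma eq_near_on_interval (I : R -> Prop) (f g : R -> R) s :
  is_open_interval I -> I s -> (forall u, I u -> f u = g u) ->
  exists eps, 0 < eps /\ forall u, Rabs (u - s) < eps -> f u = g u.
Proof.
  intros [_ [_ Hnb]] Hs H. destruct (Hnb s Hs) as [e [He H2]].
  exists e; split; auto.
Qed.

Lemma deriv_const_on (I : R -> Prop) f c s :
  is_open_interval I -> I s -> (forall u, I u -> f u = c) -> dpl f s 0.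
Proof.
  intros Hint Hs H. apply (Dloc _ (fun _ => c)); [| apply Dconst].
  apply eq_near_on_interval with I; auto.
Qed.

Lemma trig1 t : cos t * cos t + sin t * sin t = 1.
Proof. pose proof (sin2_cos2 t). unfold Rsqr in H. lra. Qed.

Lemma polar c d : c * c + d * d = 1 -> exists th, cos th = c /\ sin th = d.
Proof.
  intros H.
  assert (Hc : -1 <= c <= 1) by nra.
  assert (Hs : sqrt (1 - c²) = Rabs d).
  { replace (1 - c²) with (d²) by (unfold Rsqr; lra). apply sqrt_Rsqr_abs. }
  destruct (Rle_or_lt 0 d) as [Hd|Hd].
  - exists (acos c). split; [apply cos_acos; auto |].
    rewrite sin_acos, Hs by auto. apply Rabs_right; lra.
  - exists (- acos c). split; [rewrite cos_neg; apply cos_acos; auto |].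
    rewrite sin_neg, sin_acos, Hs by auto. rewrite Rabs_left; lra.
Qed.



Lemma zero_of_pair c a b : c * a = 0 -> c * b = 0 -> 0 < a * a + b * b -> c = 0.
Proof.
  intros Ha Hb Hp.
  assert (E : c * (a * a + b * b) = 0)
    by (replace (c * (a * a + b * b)) with (a * (c * a) + b * (c * b)) by ring;
        rewrite Ha, Hb; ring).
  apply Rmult_integral in E as [E | E]; lra.
Qed.

Lemma scaled_zero c w r : c <> 0 -> 0 < r -> c * w / r = 0 -> w = 0.
Proof.
  intros Hc Hr H. replace w with (c * w / r * (r / c)) by (field; lra).
  rewrite H. ring.
Qed.

Lemma circle_ode (I : R -> Prop) x y x1 y1 b lam s0 :
  is_open_interval I ->
  (forall s, I s -> dpl x s (x1 s)) -> (forall s, I s -> dpl y s (y1 s)) ->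
  (forall s, I s -> x1 s = - b * y s /\ y1 s = b * x s) ->
  I s0 -> 0 < lam -> x s0 * x s0 + y s0 * y s0 = lam * lam ->
  exists d, forall s, I s -> x s = lam * cos (b * s + d) /\ y s = lam * sin (b * s + d).
Proof.
  intros Hint Hdx Hdy Hode Hs0 Hl Hr.
  destruct (polar (x s0 / lam) (y s0 / lam)) as [th [Hc Hsn]].
  { field_simplify_eq; lra. }
  exists (th - b * s0).
  (* the squared distance to the candidate circle has zero derivative *)
  set (E := fun s => (x s - lam * cos (b * s + (th - b * s0))) ^ 2
                   + (y s - lam * sin (b * s + (th - b * s0))) ^ 2).
  assert (HE : forall s, I s -> dpl E s 0).
  { intros s Hs. pose proof (Hdx s Hs). pose proof (Hdy s Hs).
    destruct (Hode s Hs) as [H1 H2].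
    unfold E. eapply Deq; [dauto | cbv beta; rewrite H1, H2; ring]. }
  assert (E0 : E s0 = 0).
  { unfold E. replace (b * s0 + (th - b * s0)) with th by ring. rewrite Hc, Hsn.
    field_simplify_eq; lra. }
  intros s Hs.
  assert (Es : E s = 0).
  { rewrite <- E0. apply (const_on_interval I E (fun _ => 0)); auto. }
  unfold E in Es. simpl in Es. rewrite !Rmult_1_r in Es.
  destruct (Rplus_sqr_eq_0 _ _ Es). split; lra.
Qed.

Lemma smooth2_const (I : R -> Prop) c : smooth2 I (fun _ _ => c).
Proof.
  exists (fun i j => fun _ _ : R => match i, j with O, O => c | _, _ => 0 end).
  split; [reflexivity |]. intros i j s t Hs. split; [| split].
  - destruct i, j; apply Dconst.
  - destruct i, j; apply Dconst.
  - intros e He. exists 1. split; [lra |]. intros. rewrite Rminus_diag, Rabs_R0. exact He.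
Qed.

(** Components of the rotation surface: for i < 4,
    X_i(s,t) = Xc x y i s * Tc i t  and  d_t X_i = Xc x y i s * Td i t. *)
Definition Xc (x y : R -> R) (i : nat) (s : R) : R :=
  match i with 0%nat | 1%nat => x s | _ => y s end.
Definition Tc (i : nat) (t : R) : R :=
  match i with 0%nat | 2%nat => cos t | _ => sin t end.
Definition Td (i : nat) (t : R) : R :=
  match i with 0%nat | 2%nat => - sin t | _ => cos t end.

Lemma rotsurf_comp x y s t i : (i < 4)%nat -> rotsurf x y s t i = Xc x y i s * Tc i t.
Proof. intros H. do 4 (destruct i as [|i]; [reflexivity |]). lia. Qed.

Lemma dXc (f g f' g' : R -> R) i s :
  dpl f s (f' s) -> dpl g s (g' s) -> dpl (Xc f g i) s (Xc f' g' i s).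
Proof. intros Hf Hg. destruct i as [|[|i]]; simpl; auto. Qed.

Lemma dTc i t : dpl (fun v => Tc i v) t (Td i t).
Proof.
  destruct i as [|[|[|i]]]; simpl;
    first [apply derivable_pt_lim_cos | apply derivable_pt_lim_sin].
Qed.

Lemma dTd i t : dpl (fun v => Td i v) t (- Tc i t).
Proof.
  destruct i as [|[|[|i]]]; simpl;
    first [ apply Dopp, derivable_pt_lim_sin
          | eapply Deq; [apply derivable_pt_lim_cos | ring] ].
Qed.

Section Profile.

Variables (I : R -> Prop) (x y x1 y1 x2 y2 : R -> R).
Hypothesis Hint : is_open_interval I.
Hypothesis Hdx : forall s, I s -> dpl x s (x1 s).
Hypothesis Hdy : forall s, I s -> dpl y s (y1 s).
Hypothesis Hdx1 : forall s, I s -> dpl x1 s (x2 s).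
Hypothesis Hdy1 : forall s, I s -> dpl y1 s (y2 s).
Hypothesis Hunit : forall s, I s -> x1 s * x1 s + y1 s * y1 s = 1.
Hypothesis Hpos : forall s, I s -> 0 < x s * x s + y s * y s.

(** Writing z = x + i y = r e^{i theta}: the radial speed a = r' and the
    angular speed q = r theta' (so conj(z) z' / r = a + i q), the curvature
    kappa of the profile, and u + i v = z z' / r. *)
Definition radial (s : R) : R := (x s * x1 s + y s * y1 s) / rr x y s.
Definition angular (s : R) : R := (x s * y1 s - y s * x1 s) / rr x y s.
Definition curv (s : R) : R := x1 s * y2 s - y1 s * x2 s.
Definition twist_re (s : R) : R := (x s * x1 s - y s * y1 s) / rr x y s.
Definition twist_im (s : R) : R := (x s * y1 s + y s * x1 s) / rr x y s.

Lemma r_pos s : I s -> 0 < rr x y s.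
Proof. intros Hs. unfold rr. apply sqrt_lt_R0. simpl. rewrite !Rmult_1_r. auto. Qed.

Lemma r_sq s : I s -> rr x y s * rr x y s = x s * x s + y s * y s.
Proof.
  intros Hs. unfold rr. rewrite sqrt_sqrt; [ring |].
  pose proof (Hpos s Hs). simpl. lra.
Qed.

Lemma accel_orth s : I s -> x1 s * x2 s + y1 s * y2 s = 0.
Proof.
  intros Hs.
  assert (D : dpl (fun u => x1 u ^ 2 + y1 u ^ 2) s (2 * x1 s * x2 s + 2 * y1 s * y2 s))
    by (apply Dadd; apply Dpow2; auto).
  assert (D0 : dpl (fun u => x1 u ^ 2 + y1 u ^ 2) s 0).
  { apply deriv_const_on with I 1; auto.
    intros u Hu. simpl. rewrite !Rmult_1_r. auto. }
  pose proof (uniqueness_limite _ _ _ _ D D0). lra.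
Qed.

Lemma frenet s : I s -> x2 s = - curv s * y1 s /\ y2 s = curv s * x1 s.
Proof.
  intros Hs. pose proof (Hunit s Hs). pose proof (accel_orth s Hs).
  unfold curv. split; nsatz.
Qed.

Lemma d_rr s : I s -> dpl (rr x y) s (radial s).
Proof.
  intros Hs. pose proof (r_pos s Hs). unfold radial, rr in *.
  eapply Deq; [apply Dsqrt; [apply Dadd; apply Dpow2; auto | simpl; rewrite !Rmult_1_r; auto] |].
  cbv beta. field. lra.
Qed.

(** Reduce an identity between values of the profile data at (s,t) to
    polynomial algebra modulo the relations r^2 = x^2 + y^2, unit speed,
    Frenet and cos^2 + sin^2 = 1. *)
Ltac crunch Hs t :=
  let s := match type of Hs with I ?s => s end in
  generalize (r_pos s Hs) (r_sq s Hs) (Hunit s Hs) (frenet s Hs) (trig1 t);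
  unfold radial, angular, curv, twist_re, twist_im;
  generalize (rr x y s) (x s) (y s) (x1 s) (y1 s) (x2 s) (y2 s) (cos t) (sin t);
  clear; intros r X Y X1 Y1 X2 Y2 C Sn Hr Hr2 Hu [Hx2 Hy2] Ht;
  field_simplify_eq; [simpl pow; nsatz | lra ..].

Lemma speed_split s : I s -> radial s * radial s + angular s * angular s = 1.
Proof. intros Hs. crunch Hs 0. Qed.

Lemma frame0_eq s t i : (i < 4)%nat ->
  frame x y 0 s t i = / rr x y s * (Xc x y i s * Td i t).
Proof.
  intros Hi. simpl. unfold dt. f_equal. apply Dv_eq.
  eapply Dext; [intros v; apply rotsurf_comp; auto |].
  eapply Deq; [apply Dmul; [apply Dconst | apply dTc] | cbv beta; ring].
Qed.

Lemma frame1_eq s t i : I s -> (i < 4)%nat -> frame x y 1 s t i = Xc x1 y1 i s * Tc i t.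
Proof.
  intros Hs Hi. simpl. unfold ds. apply Dv_eq.
  eapply Dext; [intros v; apply rotsurf_comp; auto |].
  eapply Deq; [apply Dmul; [apply dXc; auto | apply Dconst] | cbv beta; ring].
Qed.

Lemma Dee00_eq s t i : (i < 4)%nat ->
  Dee x y 0 0 s t i = / rr x y s * (/ rr x y s * (Xc x y i s * - Tc i t)).
Proof.
  intros Hi. unfold Dee. simpl. f_equal. unfold dt. apply Dv_eq.
  eapply Dext; [intros v; apply frame0_eq; auto |].
  eapply Deq; [apply Dmul; [apply Dconst | apply Dmul; [apply Dconst | apply dTd]] | cbv beta; ring].
Qed.

Lemma Dee01_eq s t i : I s -> (i < 4)%nat ->
  Dee x y 0 1 s t i = / rr x y s * (Xc x1 y1 i s * Td i t).
Proof.
  intros Hs Hi. unfold Dee. simpl. f_equal. unfold dt. apply Dv_eq.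
  eapply Dext; [intros v; apply frame1_eq; auto |].
  eapply Deq; [apply Dmul; [apply Dconst | apply dTc] | cbv beta; ring].
Qed.

Lemma Dee10_eq s t i : I s -> (i < 4)%nat ->
  Dee x y 1 0 s t i =
  (- radial s / (rr x y s * rr x y s) * Xc x y i s + / rr x y s * Xc x1 y1 i s) * Td i t.
Proof.
  intros Hs Hi. pose proof (r_pos s Hs). unfold Dee. simpl. unfold ds. apply Dv_eq.
  eapply Dext; [intros v; apply frame0_eq; auto |].
  eapply Deq; [apply Dmul; [apply Dinv; [apply d_rr; auto | lra]
                           | apply Dmul; [apply dXc; auto | apply Dconst]] |].
  cbv beta. field. lra.
Qed.

Lemma Dee11_eq s t i : I s -> (i < 4)%nat -> Dee x y 1 1 s t i = Xc x2 y2 i s * Tc i t.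
Proof.
  intros Hs Hi. unfold Dee, Dir, ds. apply Dv_eq.
  apply (Dloc _ (fun u => Xc x1 y1 i u * Tc i t)).
  - apply eq_near_on_interval with I; auto. intros u Hu. apply frame1_eq; auto.
  - eapply Deq; [apply Dmul; [apply dXc; auto | apply Dconst] | cbv beta; ring].
Qed.

Ltac expand :=
  unfold inner4;
  repeat rewrite Dee00_eq by lia;
  repeat rewrite Dee01_eq by (auto; lia);
  repeat rewrite Dee10_eq by (auto; lia);
  repeat rewrite Dee11_eq by (auto; lia);
  repeat rewrite frame0_eq by lia;
  repeat rewrite frame1_eq by (auto; lia);
  simpl Xc; simpl Tc; simpl Td.

Lemma conn00_0 s t : I s -> inner4 (Dee x y 0 0 s t) (frame x y 0 s t) = 0.
Proof. intros Hs. expand. crunch Hs t. Qed.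
Lemma conn00_1 s t : I s ->
  inner4 (Dee x y 0 0 s t) (frame x y 1 s t) = - (radial s / rr x y s).
Proof. intros Hs. expand. crunch Hs t. Qed.
Lemma conn11_0 s t : I s -> inner4 (Dee x y 1 1 s t) (frame x y 0 s t) = 0.
Proof. intros Hs. expand. crunch Hs t. Qed.
Lemma conn11_1 s t : I s -> inner4 (Dee x y 1 1 s t) (frame x y 1 s t) = 0.
Proof. intros Hs. expand. crunch Hs t. Qed.

(** The second fundamental form: with the unit normal
    N = (-y1 cos t, -y1 sin t, x1 cos t, x1 sin t),
    h(e1,e1) = (q/r) N, h(e2,e2) = kappa N, and h(e1,e2) = h(e2,e1) is
    q/r^2 times the second normal (-y Td, -y Td, x Td, x Td). *)
Lemma sff00_eq s t i : I s -> (i < 4)%nat ->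
  sff x y 0 0 s t i = angular s / rr x y s * Xc (fun u => - y1 u) x1 i s * Tc i t.
Proof.
  intros Hs Hi. unfold sff.
  destruct i as [|[|[|[|i]]]]; try lia; expand; crunch Hs t.
Qed.

Lemma sff01_eq s t i : I s -> (i < 4)%nat ->
  sff x y 0 1 s t i =
  angular s / (rr x y s * rr x y s) * Xc (fun u => - y u) x i s * Td i t.
Proof.
  intros Hs Hi. unfold sff.
  destruct i as [|[|[|[|i]]]]; try lia; expand; crunch Hs t.
Qed.

Lemma sff10_eq s t i : I s -> (i < 4)%nat ->
  sff x y 1 0 s t i =
  angular s / (rr x y s * rr x y s) * Xc (fun u => - y u) x i s * Td i t.
Proof.
  intros Hs Hi. unfold sff.
  destruct i as [|[|[|[|i]]]]; try lia; expand; crunch Hs t.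
Qed.

Lemma sff11_eq s t i : I s -> (i < 4)%nat ->
  sff x y 1 1 s t i = curv s * Xc (fun u => - y1 u) x1 i s * Tc i t.
Proof.
  intros Hs Hi. unfold sff.
  destruct i as [|[|[|[|i]]]]; try lia; expand; crunch Hs t.
Qed.

Lemma gauss_curv_eq s t : I s ->
  gauss_curv x y s t = angular s * (curv s * rr x y s - angular s) / (rr x y s * rr x y s).
Proof.
  intros Hs. unfold gauss_curv, inner4.
  rewrite !sff00_eq, !sff01_eq, !sff11_eq by (auto; lia).
  simpl Xc; simpl Tc; simpl Td. crunch Hs t.
Qed.

(** M is totally geodesic iff the profile is a straight line through the
    origin, i.e. q = 0 and kappa = 0. *)
Lemma totally_geodesic_iff :
  totally_geodesic I x y <-> forall s, I s -> angular s = 0 /\ curv s = 0.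
Proof.
  split.
  - intros TG s Hs. pose proof (r_pos s Hs).
    (* components 0 and 2 of h(e1,e2) at t = pi/2 and of h(e2,e2) at t = 0 *)
    assert (N01 : forall i, (i < 4)%nat ->
      angular s / (rr x y s * rr x y s) * Xc (fun u => - y u) x i s * Td i (PI / 2) = 0)
      by (intros i Hi; rewrite <- sff01_eq by auto; apply TG; auto; lia).
    assert (N11 : forall i, (i < 4)%nat -> curv s * Xc (fun u => - y1 u) x1 i s * Tc i 0 = 0)
      by (intros i Hi; rewrite <- sff11_eq by auto; apply TG; auto; lia).
    pose proof (N01 0%nat ltac:(lia)) as Q0. pose proof (N01 2%nat ltac:(lia)) as Q2.
    pose proof (N11 0%nat ltac:(lia)) as K0. pose proof (N11 2%nat ltac:(lia)) as K2.
    cbn [Xc Tc Td] in Q0, Q2, K0, K2. rewrite sin_PI2 in Q0, Q2. rewrite cos_0 in K0, K2.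
    split.
    + assert (Hc : angular s / (rr x y s * rr x y s) = 0).
      { apply (zero_of_pair _ (y s) (x s)); [lra | lra | rewrite Rplus_comm; auto]. }
      replace (angular s) with (angular s / (rr x y s * rr x y s) * (rr x y s * rr x y s))
        by (field; lra).
      rewrite Hc. ring.
    + apply (zero_of_pair _ (y1 s) (x1 s)); [lra | lra | rewrite Rplus_comm, Hunit; auto; lra].
  - intros H s t Hs k l i Hk Hl Hi. destruct (H s Hs) as [Hq Hc].
    destruct k as [|[|k]]; try lia; destruct l as [|[|l]]; try lia;
      rewrite ?sff00_eq, ?sff01_eq, ?sff10_eq, ?sff11_eq by auto;
      rewrite ?Hq, ?Hc; unfold Rdiv; ring.
Qed.

Ltac diff_invariant Hs :=
  let s := match type of Hs with I ?s => s end in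
  pose proof (Hdx s Hs); pose proof (Hdy s Hs); pose proof (Hdx1 s Hs);
  pose proof (Hdy1 s Hs); pose proof (d_rr s Hs); pose proof (r_pos s Hs);
  unfold radial, angular, twist_re, twist_im, Rdiv;
  eapply Deq; [dauto; lra | cbv beta; crunch Hs 0].

Lemma d_radial s : I s ->
  dpl radial s (angular s * (angular s - curv s * rr x y s) / rr x y s).
Proof. intros Hs. diff_invariant Hs. Qed.

Lemma d_angular s : I s ->
  dpl angular s (radial s * (curv s * rr x y s - angular s) / rr x y s).
Proof. intros Hs. diff_invariant Hs. Qed.

Lemma d_twist_re s : I s ->
  dpl twist_re s (- (angular s + curv s * rr x y s) * twist_im s / rr x y s).
Proof. intros Hs. diff_invariant Hs. Qed.

Lemma d_twist_im s : I s ->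
  dpl twist_im s ((angular s + curv s * rr x y s) * twist_re s / rr x y s).
Proof. intros Hs. diff_invariant Hs. Qed.

(** |u + i v| = |z'| = 1 *)
Lemma twist_norm s : I s -> twist_re s * twist_re s + twist_im s * twist_im s = 1.
Proof. intros Hs. crunch Hs 0. Qed.

Lemma velocity_polar s : I s ->
  x1 s = (radial s * x s - angular s * y s) / rr x y s /\
  y1 s = (radial s * y s + angular s * x s) / rr x y s.
Proof. intros Hs. split; crunch Hs 0. Qed.

(** The Gauss map in the basis of Lambda^2 E^4 is affine in (u, v) and in
    (cos 2t, sin 2t):  G_i = a g0_i + u gu_i + v gv_i + q (gc_i cos 2t + gs_i sin 2t). *)
Definition g0 (i : nat) : R := match i with 0%nat | 5%nat => - / 2 | _ => 0 end.
Definition gu (i : nat) : R := match i with 0%nat => - / 2 | 5%nat => / 2 | _ => 0 end.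
Definition gv (i : nat) : R := match i with 2%nat => - / 2 | 3%nat => / 2 | _ => 0 end.
Definition gc (i : nat) : R := match i with 2%nat | 3%nat => / 2 | _ => 0 end.
Definition gs (i : nat) : R := match i with 1%nat => - / 2 | 4%nat => / 2 | _ => 0 end.

Definition gauss_model (a q u v c sn : R) (i : nat) : R :=
  a * g0 i + u * gu i + v * gv i + q * (gc i * c + gs i * sn).

Lemma gauss_map_eq s t i : I s -> (i < 6)%nat ->
  gauss_map x y s t i =
  gauss_model (radial s) (angular s) (twist_re s) (twist_im s) (cos (2 * t)) (sin (2 * t)) i.
Proof.
  intros Hs Hi. unfold gauss_map, gauss_model. rewrite cos_2a, sin_2a.
  destruct i as [|[|[|[|[|[|i]]]]]]; try lia; cbn [wedge g0 gu gv gc gs];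
    expand; crunch Hs t.
Qed.

(** The Laplacian in the coordinates (s,t) of the metric ds^2 + r^2 dt^2:
    Delta f = - (f_tt / r^2 + (r'/r) f_s + f_ss), for any component f of a
    vector field with the indicated partial derivatives. *)
Lemma lap_coords (F : VF) i s t (fs : R -> R) fss (ft : R -> R) ftt : I s ->
  (forall u, I u -> dpl (fun w => F w t i) u (fs u)) -> dpl fs s fss ->
  (forall v, dpl (fun w => F s w i) v (ft v)) -> dpl ft t ftt ->
  lap x y F s t i = - (ftt / (rr x y s * rr x y s) + radial s / rr x y s * fs s + fss).
Proof.
  intros Hs Hfs Hfss Hft Hftt. pose proof (r_pos s Hs).
  unfold lap. rewrite conn00_0, conn00_1, conn11_0, conn11_1 by auto.
  assert (E1 : forall u, I u -> Dir x y 1 F u t i = fs u) by (intros; apply Dv_eq; auto).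
  assert (E11 : Dir x y 1 (Dir x y 1 F) s t i = fss).
  { apply Dv_eq. apply (Dloc _ fs); auto. apply eq_near_on_interval with I; auto. }
  assert (E00 : Dir x y 0 (Dir x y 0 F) s t i = / rr x y s * (/ rr x y s * ftt)).
  { change (/ rr x y s * Dv (fun v => / rr x y s * Dv (fun w => F s w i) v) t
            = / rr x y s * (/ rr x y s * ftt)).
    f_equal. apply Dv_eq.
    apply Dext with (g := fun v => / rr x y s * ft v).
    - intros v. f_equal. apply Dv_eq. auto.
    - eapply Deq; [apply Dmul; [apply Dconst | eauto] | cbv beta; ring]. }
  rewrite E00, E11, E1 by auto. field. lra.
Qed.

Section Flat.

Hypothesis Hflat : forall s t, I s -> gauss_curv x y s t = 0.

Lemma flat_pointwise s : I s -> angular s * (curv s * rr x y s - angular s) = 0.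
Proof.
  intros Hs. pose proof (r_pos s Hs). pose proof (Hflat s 0 Hs) as K.
  rewrite gauss_curv_eq in K by auto.
  replace (angular s * (curv s * rr x y s - angular s))
    with (angular s * (curv s * rr x y s - angular s) / (rr x y s * rr x y s)
          * (rr x y s * rr x y s)) by (field; lra).
  rewrite K. ring.
Qed.

Lemma flat_normal_form : exists a0 q0, a0 * a0 + q0 * q0 = 1 /\
  forall s, I s -> radial s = a0 /\ angular s = q0 /\ curv s * rr x y s = q0.
Proof.
  destruct Hint as [[s0 Hs0] _].
  assert (Ha : forall s, I s -> radial s = radial s0).
  { intros s Hs. apply (const_on_interval I radial _ Hint d_radial); auto.
    intros u Hu. pose proof (flat_pointwise u Hu). pose proof (r_pos u Hu).
    field_simplify_eq; [nra | lra]. }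
  set (a0 := radial s0) in Ha.
  assert (Hq2 : forall s, I s -> angular s * angular s = 1 - a0 * a0).
  { intros s Hs. rewrite <- (Ha s Hs), <- (speed_split s Hs). ring. }
  assert (Hq2' : forall s, I s -> angular s * angular s = angular s0 * angular s0).
  { intros s Hs. rewrite (Hq2 s Hs), (Hq2 s0 Hs0). auto. }
  destruct (Req_dec (angular s0) 0) as [Hq0 | Hq0].
  - exists a0, 0. rewrite Hq0 in Hq2'.
    assert (Hq : forall s, I s -> angular s = 0) by (intros s Hs; pose proof (Hq2' s Hs); nra).
    split; [pose proof (Hq2 s0 Hs0); rewrite Hq0 in *; lra |].
    intros s Hs. repeat split; auto.
    assert (D0 : dpl angular s 0) by (apply deriv_const_on with I 0; auto).
    pose proof (uniqueness_limite _ _ _ _ (d_angular s Hs) D0) as D.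
    rewrite (Ha s Hs), (Hq s Hs) in D. pose proof (r_pos s Hs).
    assert (a0 <> 0) by (pose proof (Hq2 s0 Hs0); rewrite Hq0 in *; nra).
    apply scaled_zero in D; auto. lra.
  - assert (Hk : forall s, I s -> curv s * rr x y s = angular s).
    { intros s Hs. pose proof (flat_pointwise s Hs) as F.
      apply Rmult_integral in F as [F | F]; [| lra].
      exfalso. pose proof (Hq2' s Hs). rewrite F in *. nra. }
    assert (Hc : forall s, I s -> angular s = angular s0).
    { intros s Hs. apply (const_on_interval I angular _ Hint d_angular); auto.
      intros u Hu. rewrite (Hk u Hu). unfold Rdiv. ring. }
    exists a0, (angular s0). split; [pose proof (Hq2 s0 Hs0); lra |].
    intros s Hs. rewrite Hk, Hc by auto. auto.
Qed.

End Flat.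

(** Under the flat normal form, Delta G_i = (4/r^2) (q (gc_i cos 2t + gs_i sin 2t)
    + q^2 (u gu_i + v gv_i)). *)
Definition lap_model (q u v rho c sn : R) (i : nat) : R :=
  4 / rho * (q * (gc i * c + gs i * sn) + q * q * (u * gu i + v * gv i)).

(** Evaluating Delta G = f (G + C) at t = pi/4 and t = 0 in the components
    0, 2, 3, 4: for q <> 0 this forces f = 4/r^2 at t = 0 and
    a^2 v = 2 C_2, a^2 u = 2 C_0 - a. *)
Lemma one_type_model_eqs (a q u v rho f0 f1 C0 C2 C3 C4 : R) :
  0 < rho -> q <> 0 -> a * a + q * q = 1 ->
  lap_model q u v rho 0 1 4 = f1 * (gauss_model a q u v 0 1 4 + C4) ->
  lap_model q u v rho 0 1 2 = f1 * (gauss_model a q u v 0 1 2 + C2) ->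
  lap_model q u v rho 0 1 3 = f1 * (gauss_model a q u v 0 1 3 + C3) ->
  lap_model q u v rho 1 0 2 = f0 * (gauss_model a q u v 1 0 2 + C2) ->
  lap_model q u v rho 1 0 3 = f0 * (gauss_model a q u v 1 0 3 + C3) ->
  lap_model q u v rho 1 0 0 = f0 * (gauss_model a q u v 1 0 0 + C0) ->
  a * a * v = 2 * C2 /\ a * a * u = 2 * C0 - a.
Proof.
  unfold lap_model, gauss_model; cbn [g0 gu gv gc gs].
  intros Hr Hq Hs E4 E2 E3 F2 F3 F0.
  assert (Hf1 : f1 <> 0).
  { intros ->. assert (Z : 4 / rho * (q / 2) = 0) by (rewrite <- (Rmult_0_l (/ 2)); lra).
    apply Rmult_integral in Z as [Z | Z]; [| lra].
    unfold Rdiv in Z. apply Rmult_integral in Z as [Z | Z]; [lra |].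
    apply Rinv_neq_0_compat in Z; lra. }
  assert (HC : C3 = - C2).
  { assert (Z : f1 * (C2 + C3) = 0).
    { transitivity (f1 * (a * 0 + u * 0 + v * - / 2 + q * (/ 2 * 0 + 0 * 1) + C2)
                    + f1 * (a * 0 + u * 0 + v * / 2 + q * (/ 2 * 0 + 0 * 1) + C3)); [ring |].
      rewrite <- E2, <- E3. field. lra. }
    apply Rmult_integral in Z as [Z | Z]; [contradiction | lra]. }
  subst C3.
  assert (Hf0 : f0 = 4 / rho).
  { apply (Rmult_eq_reg_r q); auto.
    transitivity (f0 * (a * 0 + u * 0 + v * - / 2 + q * (/ 2 * 1 + 0 * 0) + C2)
                  + f0 * (a * 0 + u * 0 + v * / 2 + q * (/ 2 * 1 + 0 * 0) + - C2)); [field |].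
    rewrite <- F2, <- F3. field. lra. }
  subst f0.
  assert (Hk : 4 / rho <> 0) by (apply Rgt_not_eq, Rdiv_lt_0_compat; lra).
  apply Rmult_eq_reg_l in F3; [| exact Hk]. apply Rmult_eq_reg_l in F0; [| exact Hk].
  replace (a * a) with (1 - q * q) by lra. split; lra.
Qed.

Section NormalForm.

Variables a0 q0 : R.
Hypothesis Haq : a0 * a0 + q0 * q0 = 1.
Hypothesis Hnf : forall s, I s -> radial s = a0 /\ angular s = q0 /\ curv s * rr x y s = q0.

Lemma d_rr_nf s : I s -> dpl (rr x y) s a0.
Proof. intros Hs. destruct (Hnf s Hs) as [<- _]. apply d_rr; auto. Qed.

Lemma d_twist_re_nf s : I s -> dpl twist_re s (- (2 * q0) * twist_im s / rr x y s).
Proof.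
  intros Hs. destruct (Hnf s Hs) as [_ [Hq Hk]].
  eapply Deq; [apply d_twist_re; auto | rewrite Hq, Hk; f_equal; ring].
Qed.

Lemma d_twist_im_nf s : I s -> dpl twist_im s (2 * q0 * twist_re s / rr x y s).
Proof.
  intros Hs. destruct (Hnf s Hs) as [_ [Hq Hk]].
  eapply Deq; [apply d_twist_im; auto | rewrite Hq, Hk; f_equal; ring].
Qed.

Lemma lap_gauss s t i : I s -> (i < 6)%nat ->
  lap x y (gauss_map x y) s t i =
  lap_model q0 (twist_re s) (twist_im s) (rr x y s * rr x y s) (cos (2 * t)) (sin (2 * t)) i.
Proof.
  intros Hs Hi. pose proof (r_pos s Hs).
  assert (HG : forall s' t', I s' -> gauss_map x y s' t' i =
    gauss_model a0 q0 (twist_re s') (twist_im s') (cos (2 * t')) (sin (2 * t')) i).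
  { intros s' t' Hs'. destruct (Hnf s' Hs') as [Ha [Hq _]].
    rewrite gauss_map_eq, Ha, Hq by auto. reflexivity. }
  unfold gauss_model in HG.
  rewrite (lap_coords (gauss_map x y) i s t
    (fun u => 2 * q0 * (twist_re u * gv i - twist_im u * gu i) * / rr x y u)
    (2 * q0 * (- 2 * q0 * (twist_im s * gv i + twist_re s * gu i)
               - a0 * (twist_re s * gv i - twist_im s * gu i)) / (rr x y s * rr x y s))
    (fun v => 2 * q0 * (gs i * cos (2 * v) - gc i * sin (2 * v)))
    (- 4 * q0 * (gc i * cos (2 * t) + gs i * sin (2 * t)))); auto.
  - destruct (Hnf s Hs) as [-> _]. unfold lap_model. field. lra.
  - intros u Hu. pose proof (r_pos u Hu).
    pose proof (d_twist_re_nf u Hu). pose proof (d_twist_im_nf u Hu).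
    apply (Dloc _ (fun w => a0 * g0 i + twist_re w * gu i + twist_im w * gv i
                   + q0 * (gc i * cos (2 * t) + gs i * sin (2 * t)))).
    + apply eq_near_on_interval with I; auto.
    + eapply Deq; [dauto | cbv beta; field; lra].
  - pose proof (d_twist_re_nf s Hs). pose proof (d_twist_im_nf s Hs). pose proof (d_rr_nf s Hs).
    eapply Deq; [dauto; lra | cbv beta; field; lra].
  - intros v. apply Dext with (g := fun w => a0 * g0 i + twist_re s * gu i + twist_im s * gv i
                   + q0 * (gc i * cos (2 * w) + gs i * sin (2 * w))); [auto |].
    eapply Deq; [dauto | cbv beta; ring].
  - eapply Deq; [dauto | cbv beta; ring].
Qed.

Lemma totally_geodesic_iff_nf : totally_geodesic I x y <-> q0 = 0.
Proof.
  rewrite totally_geodesic_iff. destruct Hint as [[s0 Hs0] _]. split.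
  - intros H. destruct (Hnf s0 Hs0) as [_ [<- _]]. apply H; auto.
  - intros -> s Hs. destruct (Hnf s Hs) as [_ [Hq Hk]]. split; auto.
    pose proof (r_pos s Hs).
    replace (curv s) with (curv s * rr x y s / rr x y s) by (field; lra).
    rewrite Hk. unfold Rdiv. ring.
Qed.

Lemma one_type_relations (f : R -> R -> R) (C : Vec) : q0 <> 0 ->
  (forall s t, I s -> forall i, (i < 6)%nat ->
     lap x y (gauss_map x y) s t i = f s t * (gauss_map x y s t i + C i)) ->
  forall s, I s ->
    a0 * a0 * twist_im s = 2 * C 2%nat /\ a0 * a0 * twist_re s = 2 * C 0%nat - a0.
Proof.
  intros Hq Heq s Hs. pose proof (r_pos s Hs). destruct (Hnf s Hs) as [Ha [Hqs _]].
  assert (Hc1 : cos (2 * (PI / 4)) = 0)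
    by (replace (2 * (PI / 4)) with (PI / 2) by field; apply cos_PI2).
  assert (Hs1 : sin (2 * (PI / 4)) = 1)
    by (replace (2 * (PI / 4)) with (PI / 2) by field; apply sin_PI2).
  assert (Hc0 : cos (2 * 0) = 1) by (rewrite Rmult_0_r; apply cos_0).
  assert (Hs0 : sin (2 * 0) = 0) by (rewrite Rmult_0_r; apply sin_0).
  pose proof (Heq s (PI / 4) Hs 4%nat ltac:(lia)) as E4.
  pose proof (Heq s (PI / 4) Hs 2%nat ltac:(lia)) as E2.
  pose proof (Heq s (PI / 4) Hs 3%nat ltac:(lia)) as E3.
  pose proof (Heq s 0 Hs 2%nat ltac:(lia)) as F2.
  pose proof (Heq s 0 Hs 3%nat ltac:(lia)) as F3.
  pose proof (Heq s 0 Hs 0%nat ltac:(lia)) as F0.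
  rewrite lap_gauss, gauss_map_eq, Ha, Hqs in E4, E2, E3, F2, F3, F0 by (auto; lia).
  rewrite Hc1, Hs1 in E4, E2, E3. rewrite Hc0, Hs0 in F2, F3, F0.
  apply (one_type_model_eqs a0 q0 _ _ (rr x y s * rr x y s) (f s 0) (f s (PI / 4)) _ _
           (C 3%nat) (C 4%nat)); auto.
  nra.
Qed.

(** q0 <> 0 and a pointwise 1-type Gauss map force a0 = 0: otherwise u and v
    are constant by [one_type_relations], and then u' = -2 q0 v / r and
    v' = 2 q0 u / r force u = v = 0, contradicting u^2 + v^2 = 1. *)
Lemma radial_zero_of_one_type : q0 <> 0 -> pointwise_1type I x y -> a0 = 0.
Proof.
  intros Hq [f [C [_ Heq]]]. destruct Hint as [[s0 Hs0] _].
  destruct (Req_dec a0 0) as [| Ha0]; [auto | exfalso].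
  pose proof (one_type_relations f C Hq Heq) as K.
  pose proof (r_pos s0 Hs0) as Hr0.
  assert (Hv0 : twist_im s0 = 0).
  { assert (D : dpl twist_re s0 0).
    { apply deriv_const_on with I ((2 * C 0%nat - a0) / (a0 * a0)); auto.
      intros u Hu. destruct (K u Hu) as [_ <-]. field. auto. }
    pose proof (uniqueness_limite _ _ _ _ (d_twist_re_nf s0 Hs0) D) as Z.
    apply (scaled_zero (- (2 * q0)) _ (rr x y s0)); auto; lra. }
  assert (Hu0 : twist_re s0 = 0).
  { assert (D : dpl twist_im s0 0).
    { apply deriv_const_on with I (2 * C 2%nat / (a0 * a0)); auto.
      intros u Hu. destruct (K u Hu) as [<- _]. field. auto. }
    pose proof (uniqueness_limite _ _ _ _ (d_twist_im_nf s0 Hs0) D) as Z.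
    apply (scaled_zero (2 * q0) _ (rr x y s0)); auto; lra. }
  pose proof (twist_norm s0 Hs0) as N. rewrite Hu0, Hv0 in N. lra.
Qed.

(** For a0 = 0 the radius r is constant and the profile is a circle about the
    origin traversed with angular velocity q0 / r. *)
Lemma circle_of_radial_zero : a0 = 0 ->
  exists b0 lam d, b0 ^ 2 * lam ^ 2 = 1 /\
    forall s, I s -> x s = lam * cos (b0 * s + d) /\ y s = lam * sin (b0 * s + d).
Proof.
  intros Ha0. destruct Hint as [[s0 Hs0] _].
  assert (Hr : forall s, I s -> rr x y s = rr x y s0).
  { intros s Hs. apply (const_on_interval I (rr x y) (fun _ => a0)); auto.
    apply d_rr_nf. }
  set (lam := rr x y s0) in Hr. assert (Hl : 0 < lam) by apply r_pos, Hs0.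
  destruct (circle_ode I x y x1 y1 (q0 / lam) lam s0) as [d Hd]; auto.
  - intros s Hs. destruct (velocity_polar s Hs) as [-> ->].
    destruct (Hnf s Hs) as [-> [-> _]]. rewrite Ha0, Hr by auto. split; field; lra.
  - rewrite <- r_sq; auto.
  - exists (q0 / lam), lam, d. split; auto.
    rewrite Ha0 in Haq. field_simplify_eq; lra.
Qed.

Lemma one_type_of_plane : q0 = 0 -> pointwise_1type I x y.
Proof.
  intros Hq. exists (fun _ _ => 0), (fun _ => 0). split; [apply smooth2_const |].
  intros s t Hs i Hi. rewrite lap_gauss by auto. subst q0. unfold lap_model. ring.
Qed.

Lemma one_type_of_circle (lam : R) : lam <> 0 -> a0 = 0 ->
  (forall s, I s -> rr x y s * rr x y s = lam * lam) -> pointwise_1type I x y.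
Proof.
  intros Hl Ha0 Hr. exists (fun _ _ => 4 / (lam * lam)), (fun _ => 0).
  split; [apply smooth2_const |].
  intros s t Hs i Hi. destruct (Hnf s Hs) as [Ha [Hqs _]].
  rewrite lap_gauss, gauss_map_eq, Hr, Ha, Hqs, Ha0 by auto.
  rewrite Ha0 in Haq. unfold lap_model, gauss_model.
  replace (q0 * q0) with 1 by lra. field. auto.
Qed.

Lemma one_type_iff :
  pointwise_1type I x y <->
  (totally_geodesic I x y \/
   exists b0 lam d : R, b0 ^ 2 * lam ^ 2 = 1 /\
     forall s t, I s ->
       rotsurf x y s t =
       rotsurf (fun u => lam * cos (b0 * u + d)) (fun u => lam * sin (b0 * u + d)) s t).
Proof.
  rewrite totally_geodesic_iff_nf. split.
  - intros H1. destruct (Req_dec q0 0) as [Hq | Hq]; [left; auto | right].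
    destruct (circle_of_radial_zero (radial_zero_of_one_type Hq H1))
      as [b0 [lam [d [Hb Hc]]]].
    exists b0, lam, d. split; auto. intros s t Hs.
    unfold rotsurf. destruct (Hc s Hs) as [-> ->]. reflexivity.
  - intros [Hq | [b0 [lam [d [Hb Hrot]]]]]; [apply one_type_of_plane; auto |].
    assert (Hl : lam <> 0) by (intros ->; lra).
    (* on the circle r^2 = lam^2, so r is constant and a0 = r' = 0 *)
    assert (Hr : forall s, I s -> rr x y s * rr x y s = lam * lam).
    { intros s Hs. rewrite r_sq by auto.
      pose proof (f_equal (fun X => X 0%nat) (Hrot s 0 Hs)) as E0.
      pose proof (f_equal (fun X => X 2%nat) (Hrot s 0 Hs)) as E2.
      cbn in E0, E2. rewrite cos_0, !Rmult_1_r in E0, E2. rewrite E0, E2.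
      pose proof (trig1 (b0 * s + d)). nra. }
    destruct Hint as [[s0 Hs0] _].
    assert (Ha0 : a0 = 0).
    { apply (uniqueness_limite (rr x y) s0); [apply d_rr_nf; auto |].
      apply deriv_const_on with I (sqrt (lam * lam)); auto.
      intros u Hu. rewrite <- (Hr u Hu), sqrt_square; auto. apply Rlt_le, r_pos, Hu. }
    apply one_type_of_circle with lam; auto.
Qed.

End NormalForm.

End Profile.

Theorem theorem1 (I : R -> Prop) (x y : R -> R) :
  is_open_interval I ->
  smooth1 I x -> smooth1 I y ->
  (forall s, I s -> Dv x s ^ 2 + Dv y s ^ 2 = 1) ->
  (forall s, I s -> 0 < x s ^ 2 + y s ^ 2) ->
  (forall s t, I s -> gauss_curv x y s t = 0) ->
  (pointwise_1type I x y <->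
    (totally_geodesic I x y \/
     exists b0 lam d : R, b0 ^ 2 * lam ^ 2 = 1 /\
       forall s t, I s ->
         rotsurf x y s t =
         rotsurf (fun u => lam * cos (b0 * u + d))
                 (fun u => lam * sin (b0 * u + d)) s t)).
Proof.
  intros Hint [Fx [<- HFx]] [Fy [<- HFy]] Hunit Hpos Hflat.
  (* the profile with its first two derivatives, taken from the smoothness towers *)
  assert (Hunit' : forall s, I s -> Fx 1%nat s * Fx 1%nat s + Fy 1%nat s * Fy 1%nat s = 1).
  { intros s Hs. rewrite <- (Dv_eq _ _ _ (HFx 0%nat s Hs)), <- (Dv_eq _ _ _ (HFy 0%nat s Hs)).
    specialize (Hunit s Hs). simpl in Hunit. lra. }
  assert (Hpos' : forall s, I s -> 0 < Fx 0%nat s * Fx 0%nat s + Fy 0%nat s * Fy 0%nat s).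
  { intros s Hs. specialize (Hpos s Hs). simpl in Hpos. lra. }
  destruct (flat_normal_form I _ _ _ _ _ _ Hint (HFx 0%nat) (HFy 0%nat) (HFx 1%nat) (HFy 1%nat)
              Hunit' Hpos' Hflat) as [a0 [q0 [Haq Hnf]]].
  exact (one_type_iff I _ _ _ _ _ _ Hint (HFx 0%nat) (HFy 0%nat) (HFx 1%nat) (HFy 1%nat)
           Hunit' Hpos' a0 q0 Haq Hnf).
Qed.
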